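(* Let $(P,\le,A_1\ldots A_k)$ be a regular poset of width $w$ and let $(u,s)$ be any characteristics. Then the poset $(\mathcal{P}(u,s),\le_{(u,s)})$ of active nodes with characteristics $(u,s)$ has width at most $\lfloor\sqrt{w}\rfloor$.
   Context: Let $(P,\le)$ be a finite poset of width $w$. For $A\subseteq P$ let $A{\uparrow}=\{y: x\le y\text{ for some }x\in A\}$, $A{\downarrow}=\{y: y\le x\text{ for some }x\in A\}$. For maximal antichains $A,B$ write $A\sqsubseteq B$ if $A\subseteq B{\downarrow}$, and $A\sqsubset B$ if also $A\ne B$. For disjoint antichains $A\sqsubset B$, $(A,B,<)$ is the bipartite graph with classes $A,B$ and edges $(a<b)$ for $a\in A,b\in B$, $a<b$; it is regular if every edge lies in a perfect matching. A regular poset $(P,\le,A_1\ldots A_k)$: $A_1,\dots,A_k$ are maximum antichains partitioning $P$, $(\{A_1,\dots,A_k\},\sqsubseteq)$ is a linear order with minimum $A_1$ and maximum $A_2$, $a<b$ for all $a\in A_1,b\in A_2$, and for every $t\in[2,k]$ and every $A_p\sqsubset A_s$ consecutive in $(\{A_1,\dots,A_t\},\sqsubseteq)$ the graph $(A_p,A_s,<)$ is regular. A node is a bipartite graph $N=(X,Y,<)$ where, for some such consecutive pair $A_p\sqsubset A_s$ (at some stage $t$), $X\subseteq A_p$, $Y\subseteq A_s$ and $X\cup Y$ is the vertex set of a connected component of $(A_p,A_s,<)$. Its width is $|X|=|Y|$, $\mathrm{Int}(N)=X{\uparrow}\cap Y{\downarrow}$, and its surplus is the largest $k$ such that $|A{\uparrow}\cap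 Y|\ge\min\{|A|+k,|Y|\}$ for all non-empty $A\subseteq X$ ($\infty$ if $N$ is complete bipartite); its characteristics is the pair (width, surplus). Node tree: the set of all nodes, where when for $t\ge3$ the antichain $A_t$ is inserted between $A_p\sqsubset A_s$ consecutive at stage $t-1$, each node $M$ of $(A_p,A_t,<)$ or $(A_t,A_s,<)$ is a child of the unique node $N$ of $(A_p,A_s,<)$ with $\mathrm{Int}(M)\subset\mathrm{Int}(N)$; it is a rooted tree with root $(A_1,A_2,<)$. A Dilworth clique of width $m$ in a node $(X,Y,<)$ is a set $\{x_1,\dots,x_m,y_1,\dots,y_m\}$ with $x_i\in X$, $y_i\in Y$, $x_i<y_j$ for all $i,j\in[m]$, such that the edges $x_1<y_1,\dots,x_m<y_m$ extend to a perfect matching of $(X,Y,<)$. A node is active if it contains a Dilworth clique of width $\lceil\sqrt{w}\rceil$ and no proper ancestor of it in the node tree has the same characteristics. For each active node $N$ fix a Dilworth clique $R(N)$ of width $\lceil\sqrt w\rceil$ in $N$. $\mathcal{P}(u,s)$ is the set of active nodes with characteristics $(u,s)$, and for $N,K\in\mathcal{P}(u,s)$, $N<_{(u,s)}K$ iff there are a maximal element $x$ of $(R(N),\le)$ and a minimal element $y$ of $(R(K),\le)$ with $x\le y$; $\le_{(u,s)}$ is the resulting partial order. *)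

From Stdlib Require Import Relation_Operators.
From mathcomp Require Import all_boot.

Set Implicit Arguments.
Unset Strict Implicit.
Unset Printing Implicit Defensive.

Definition floor_sqrt (w : nat) : nat := \max_(i < w.+1 | i * i <= w) i.
Definition ceil_sqrt (w : nat) : nat := \big[minn/w]_(i < w.+1 | w <= i * i) i.

Section RegularPoset.
Variables (T : finType) (le : rel T).

Definition is_poset : Prop :=
  reflexive le /\ antisymmetric le /\ transitive le.

Definition lt (x y : T) : bool := (x != y) && le x y.

Definition up (A : {set T}) : {set T} := [set y | [exists x in A, le x y]].
Definition down (A : {set T}) : {set T} := [set y | [exists x in A, le y x]].

Definition antichain (A : {set T}) : bool :=
  [forall x in A, forall y in A, le x y ==> (x == y)].

Definition width : nat := \max_(A : {set T} | antichain A) #|A|.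

Definition maximum_antichain (A : {set T}) : bool :=
  antichain A && (#|A| == width).

Definition sqle (A B : {set T}) : bool := A \subset down B.
Definition sqlt (A B : {set T}) : bool := sqle A B && (A != B).

Definition perfect_matching (X Y : {set T}) (f : T -> T) : Prop :=
  {in X &, injective f} /\ f @: X = Y /\ (forall x, x \in X -> lt x (f x)).

Definition regular_bip (X Y : {set T}) : Prop :=
  forall a b, a \in X -> b \in Y -> lt a b ->
    exists f, perfect_matching X Y f /\ f a = b.

Definition bip_adj (X Y : {set T}) : rel T :=
  fun x y => ((x \in X) && (y \in Y) && lt x y) || ((y \in X) && (x \in Y) && lt y x).

(* N = (N.1, N.2) is a node of (X, Y, <): N.1 ∪ N.2 is the vertex set of a
   connected component of (X, Y, <), with N.1 ⊆ X and N.2 ⊆ Y. *)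
Definition node_of (X Y : {set T}) (N : {set T} * {set T}) : Prop :=
  exists2 x, x \in X :|: Y &
    N.1 = X :&: [set y | connect (bip_adj X Y) x y] /\
    N.2 = Y :&: [set y | connect (bip_adj X Y) x y].

Definition Int (N : {set T} * {set T}) : {set T} := up N.1 :&: down N.2.

Definition complete_bip (X Y : {set T}) : bool :=
  [forall x in X, forall y in Y, lt x y].

Definition surplus_ok (X Y : {set T}) (k : nat) : bool :=
  [forall B : {set T}, ((B \subset X) && (B != set0)) ==>
     (minn (#|B| + k) #|Y| <= #|up B :&: Y|)].

(* s = None encodes surplus = infinity *)
Definition is_surplus (X Y : {set T}) (s : option nat) : bool :=
  match s with
  | None => complete_bip X Y
  | Some k => ~~ complete_bip X Y && surplus_ok X Y k && ~~ surplus_ok X Y k.+1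
  end.

Definition has_char (N : {set T} * {set T}) (c : nat * option nat) : Prop :=
  #|N.1| = c.1 /\ is_surplus N.1 N.2 c.2.

Definition dclique (X Y : {set T}) (m : nat) (C : {set T}) : Prop :=
  exists Cx Cy : {set T},
    [/\ Cx \subset X, Cy \subset Y, #|Cx| = m, #|Cy| = m & C = Cx :|: Cy] /\
    (forall x y, x \in Cx -> y \in Cy -> lt x y) /\
    (exists f, perfect_matching X Y f /\ f @: Cx = Cy).

Section WithAntichains.
Variables (k : nat) (A : nat -> {set T}).

Definition idx (i : nat) : bool := (1 <= i <= k).

Definition consec (t p s : nat) : Prop :=
  [/\ 1 <= p <= t, 1 <= s <= t, sqlt (A p) (A s) &
      ~ exists q, [/\ 1 <= q <= t, sqlt (A p) (A q) & sqlt (A q) (A s)]].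

Definition regular_poset : Prop :=
  2 <= k /\
  (forall i, idx i -> maximum_antichain (A i)) /\
  (forall i j, idx i -> idx j -> i != j -> [disjoint A i & A j]) /\
  (forall x, exists2 i, idx i & x \in A i) /\
  (forall i j, idx i -> idx j -> sqle (A i) (A j) \/ sqle (A j) (A i)) /\
  (forall i, idx i -> sqle (A 1) (A i) /\ sqle (A i) (A 2)) /\
  (forall a b, a \in A 1 -> b \in A 2 -> lt a b) /\
  (forall t p s, 2 <= t <= k -> consec t p s -> regular_bip (A p) (A s)).

Definition is_node (N : {set T} * {set T}) : Prop :=
  exists t p s, [/\ 2 <= t <= k, consec t p s & node_of (A p) (A s) N].

Definition child (M N : {set T} * {set T}) : Prop :=
  exists t p s,
    3 <= t <= k /\ consec t.-1 p s /\ sqlt (A p) (A t) /\ sqlt (A t) (A s) /\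
    (node_of (A p) (A t) M \/ node_of (A t) (A s) M) /\
    node_of (A p) (A s) N /\ Int M \proper Int N.

Definition proper_ancestor (K N : {set T} * {set T}) : Prop :=
  clos_trans _ child N K.

Definition active (N : {set T} * {set T}) : Prop :=
  [/\ is_node N,
      (exists C, dclique N.1 N.2 (ceil_sqrt width) C) &
      (forall K c, proper_ancestor K N -> has_char N c -> ~ has_char K c)].

End WithAntichains.

Definition maximal_in (C : {set T}) (x : T) : Prop :=
  x \in C /\ (forall z, z \in C -> le x z -> z = x).
Definition minimal_in (C : {set T}) (y : T) : Prop :=
  y \in C /\ (forall z, z \in C -> le z y -> z = y).

Definition lt_us (R : {set T} * {set T} -> {set T}) (N K : {set T} * {set T}) : Prop :=
  exists x y, [/\ maximal_in (R N) x, minimal_in (R K) y & le x y].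

End RegularPoset.

(* Fix for every node N of the family its Dilworth clique R N, with lower half bot N and
   upper half top N of size ceil(sqrt w), matched by a perfect matching of N.  Push points
   upwards one step at a time: inside a node of the family along its clique matching,
   elsewhere along the perfect matchings between consecutive levels of the final chain.
   After |P| steps every point has reached the top antichain A_2.  Because an active node
   has no proper ancestor with the same characteristics, the tops of the nodes of the
   family are pairwise disjoint and avoid each other's interiors; this makes the pushing
   injective off its fixed points.  Hence two orbits started in the sets top N can only
   meet if one of them passes from bot N into top N after starting at a top point y' of
   another node N'; then y', maximal in R N', lies below a minimal point of R N, against
   the antichain condition for <_(u,s).  The pushing is therefore injective on the union of the sets top N, and
   |family| * ceil(sqrt w) <= |A_2| = w. *)

From mathcomp Require Import all_boot.
From mathcomp Require Import zify.
From Stdlib Require Import IndefiniteDescription Relation_Operators.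

Set Implicit Arguments.
Unset Strict Implicit.
Unset Printing Implicit Defensive.

Lemma ceil_sqrtP w : 0 < w -> 0 < ceil_sqrt w /\ w <= ceil_sqrt w * ceil_sqrt w.
Proof.
move=> w_gt0; rewrite /ceil_sqrt; split.
  apply: (big_ind (leq 1)) => // [x y x_gt0 y_gt0|i]; first by rewrite /minn; case: ifP.
  by case: i => [[|i] ?] //=; rewrite muln0 leqNgt w_gt0.
apply: (big_ind (fun x => w <= x * x)) => [|x y wx wy|//]; first by rewrite leq_pmull.
by rewrite /minn; case: ifP.
Qed.

Lemma leq_floor_sqrt w p : 0 < w -> p * ceil_sqrt w <= w -> p <= floor_sqrt w.
Proof.
move=> w_gt0 pc_le_w; have [c_gt0 w_le_cc] := ceil_sqrtP w_gt0.
have p_le_c : p <= ceil_sqrt w by rewrite -(leq_pmul2r c_gt0) (leq_trans pc_le_w).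
have p_lt_w : p < w.+1 by rewrite ltnS (leq_trans _ pc_le_w) // leq_pmulr.
apply: (leq_bigmax_cond (Ordinal p_lt_w)) => /=.
exact: leq_trans (leq_mul (leqnn p) p_le_c) pc_le_w.
Qed.

Lemma disjoint_family_card (I T : finType) (J : {set I}) (F : I -> {set T}) (D : {set T}) c :
    {in J, forall i, F i \subset D /\ #|F i| = c} ->
    {in J &, forall i j, i != j -> [disjoint F i & F j]} ->
  #|J| * c <= #|D|.
Proof.
move=> FD F_disj; pose G i := if i \in J then F i else set0.
have G_disj i j : i != j -> [disjoint G i & G j].
  by rewrite /G; case: ifP => iJ; case: ifP => jJ ij; rewrite ?F_disj // -setI_eq0 ?set0I ?setI0.
have card_cup := partition_disjoint_bigcup addn (fun=> 1) G_disj.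
rewrite !sum1_card in card_cup.
have -> : #|J| * c = #|\bigcup_i G i|.
  rewrite card_cup -sum_nat_const (bigID (mem J)) /= [X in _ + X]big1 ?addn0.
    by apply: eq_bigr => i iJ; rewrite sum1_card /G iJ (FD i iJ).2.
  by move=> i /negbTE iJ; rewrite /G iJ big_set0.
apply/subset_leq_card/bigcupsP => i _; rewrite /G; case: ifP => [iJ|_].
  exact: (FD i iJ).1.
exact: sub0set.
Qed.

Lemma iter_merge (U : eqType) (f : U -> U) (P : U -> Prop) :
    (forall z, P z -> P (f z)) ->
    (forall z z', P z -> P z' -> f z = f z' -> [\/ z = z', f z = z | f z' = z']) ->
  forall n m y y', P y -> P y' -> iter n f y = iter m f y' ->
  [\/ y = y', exists i, iter i f y' <> y /\ f (iter i f y') = y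
            | exists i, iter i f y <> y' /\ f (iter i f y) = y'].
Proof.
move=> Pf f_inj n m y y' Py Py'.
have Piter i x : P x -> P (iter i f x) by elim: i => //= i IH /IH /Pf.
move: {2}(n + m) (leqnn (n + m)) => l.
elim: l n m => [|l IH] [|n] [|m] //= nml yE; try by exfalso; lia.
1,2: by constructor 1.
- have [z_y|z_y] := eqVneq (iter m f y') y; first by apply: (IH 0 m) => //; lia.
  by constructor 2; exists m; split; [apply/eqP|].
- have [z_y'|z_y'] := eqVneq (iter n f y) y'; first by apply: (IH n 0) => //; lia.
  by constructor 3; exists n; split; [apply/eqP|].
- case: (f_inj _ _ (Piter n y Py) (Piter m y' Py') yE) => [eq_z|fix_z|fix_z'].
  + by apply: (IH n m) => //; lia.
  + by apply: (IH n m.+1) => /=; [lia|rewrite -yE fix_z].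
  + by apply: (IH n.+1 m) => /=; [lia|rewrite yE fix_z'].
Qed.

Lemma connect_inv (T : finType) (e : rel T) (P : T -> Prop) :
  (forall u v, P u -> e u v -> P v) -> forall a b, P a -> connect e a b -> P b.
Proof.
move=> Pe a b Pa /connectP [p e_p ->]; elim: p a Pa e_p => //= v p IH a Pa /andP [e_av].
exact/IH/(Pe a).
Qed.

Section Poset.
Variables (T : finType) (le : rel T).
Implicit Types (X Y Z : {set T}) (N : {set T} * {set T}).

Lemma antichain_card_le X : antichain le X -> #|X| <= width le.
Proof. exact: leq_bigmax_cond. Qed.

Lemma width_gt0 (x : T) : 0 < width le.
Proof.
rewrite -(cards1 x); apply: antichain_card_le.
by apply/forall_inP => a /set1P ->; apply/forall_inP => b /set1P ->; rewrite eqxx implybT.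
Qed.

Lemma ltW x y : lt le x y -> le x y.
Proof. by case/andP. Qed.

Lemma perfect_matching_in X Y f x : perfect_matching le X Y f -> x \in X -> f x \in Y.
Proof. by case=> _ [<- _] /(imset_f f). Qed.

Lemma perfect_matching_lt X Y f x : perfect_matching le X Y f -> x \in X -> lt le x (f x).
Proof. by case=> _ [_]; apply. Qed.

Lemma perfect_matching_inj X Y f : perfect_matching le X Y f -> {in X &, injective f}.
Proof. by case. Qed.

Lemma sqleP X Y : reflect (forall a, a \in X -> exists2 b, b \in Y & le a b) (sqle le X Y).
Proof.
apply: (iffP subsetP) => [XY a /XY|XY a /XY [b bY ab]]; rewrite inE.
  by case/exists_inP => b; exists b.
by apply/exists_inP; exists b.
Qed.

Lemma antichainP X : reflect {in X &, forall a b, le a b -> a = b} (antichain le X).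
Proof.
apply: (iffP forall_inP) => [X_anti a b aX bX ab|X_anti a aX].
  by have /forall_inP/(_ b bX)/implyP/(_ ab)/eqP := X_anti a aX.
by apply/forall_inP => b bX; apply/implyP => ab; apply/eqP/X_anti.
Qed.

Lemma bip_adjC X Y : symmetric (bip_adj le X Y).
Proof. by move=> a b; rewrite /bip_adj orbC. Qed.

Lemma node_of_in1 X Y N a : node_of le X Y N -> a \in N.1 -> a \in X.
Proof. by case=> c _ [-> _] /setIP []. Qed.

Lemma node_of_in2 X Y N b : node_of le X Y N -> b \in N.2 -> b \in Y.
Proof. by case=> c _ [_ ->] /setIP []. Qed.

Lemma node_of_adj2 X Y N a b :
  node_of le X Y N -> a \in N.1 -> b \in Y -> lt le a b -> b \in N.2.
Proof.
case=> c _ [-> ->] /setIP [aX]; rewrite !inE => c_a bY ab; rewrite bY.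
by apply: connect_trans c_a (connect1 _); rewrite /bip_adj aX bY ab.
Qed.

Lemma node_of_adj1 X Y N a b :
  node_of le X Y N -> b \in N.2 -> a \in X -> lt le a b -> a \in N.1.
Proof.
case=> c _ [-> ->] /setIP [bY]; rewrite !inE => c_b aX ab; rewrite aX.
by apply: connect_trans c_b (connect1 _); rewrite bip_adjC /bip_adj aX bY ab.
Qed.

Lemma node_of_eq X Y N N' a b :
  node_of le X Y N -> node_of le X Y N' -> a \in N.1 -> b \in N'.2 -> lt le a b -> N = N'.
Proof.
move: N N' => [N1 N2] [N1' N2'] [c _ /= [-> ->]] [c' _ /= [-> ->]].
rewrite !inE => /andP [aX c_a] /andP [bY c'_b] ab.
have connC := sym_connect_sym (@bip_adjC X Y).
have c_c' : connect (bip_adj le X Y) c c'.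
  apply: connect_trans c_a _; rewrite connC; apply: connect_trans c'_b (connect1 _).
  by rewrite bip_adjC /bip_adj aX bY ab.
have -> : [set v | connect (bip_adj le X Y) c v] = [set v | connect (bip_adj le X Y) c' v].
  apply/setP => v; rewrite !inE; apply/idP/idP; last exact: connect_trans.
  by apply: connect_trans; rewrite connC.
by [].
Qed.

Lemma IntP N z :
  reflect ((exists2 a, a \in N.1 & le a z) /\ (exists2 b, b \in N.2 & le z b))
          (z \in Int le N).
Proof.
rewrite !inE; apply: (iffP andP) => [[/exists_inP [a aN az] /exists_inP [b bN zb]]|].
  by split; [exists a|exists b].
by case=> [[a aN az] [b bN zb]]; split; apply/exists_inP; [exists a|exists b].
Qed.

Lemma node_of_dual X Y N :
  node_of (fun a b => le b a) X Y N -> node_of le Y X (N.2, N.1).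
Proof.
have adj_dual : bip_adj (fun a b => le b a) X Y =2 bip_adj le Y X.
  move=> a b; rewrite /bip_adj /lt [b == a]eq_sym orbC.
  by case: (a \in X); case: (a \in Y); case: (b \in X); case: (b \in Y).
case=> c cXY [N1 N2]; exists c; first by rewrite setUC.
by rewrite /= N1 N2; split; apply/setP => v; rewrite !inE (eq_connect adj_dual).
Qed.

Lemma Int_dual N : Int (fun a b => le b a) N = Int le (N.2, N.1).
Proof. exact: setIC. Qed.

Hypothesis le_po : is_poset le.

Lemma le_refl : reflexive le.
Proof. by case: le_po. Qed.

Lemma le_trans : transitive le.
Proof. by case: le_po => _ []. Qed.

Lemma le_anti x y : le x y -> le y x -> x = y.
Proof. by case: le_po => _ [le_anti _] xy yx; apply: le_anti; rewrite xy yx. Qed.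

Lemma iter_inflationary_le (f : T -> T) n z : (forall v, le v (f v)) -> le z (iter n f z).
Proof.
move=> f_infl; elim: n => [|n IH] /=; first exact: le_refl.
exact: le_trans IH (f_infl _).
Qed.

Lemma iter_inflationary_fixed (f : T -> T) z :
  (forall v, le v (f v)) -> f (iter #|T| f z) = iter #|T| f z.
Proof.
move=> f_infl; pose rank v := #|[set v' | le v v']|.
have rank_f v : f v <> v -> rank (f v) < rank v.
  move=> fv_v; apply/proper_card/properP; split.
    by apply/subsetP => v'; rewrite !inE; apply: le_trans (f_infl v).
  exists v; rewrite !inE ?le_refl //; apply/negP => fv_le_v.
  exact/fv_v/le_anti.
suff /(_ #|T|) [//|] : forall n, f (iter n f z) = iter n f z \/ rank (iter n f z) + n <= #|T|.
  have : 0 < rank (iter #|T| f z) by apply/card_gt0P; exists (iter #|T| f z); rewrite inE le_refl.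
  lia.
elim=> [|n [fixed|IH]] /=; first by right; rewrite addn0 max_card.
  by left; rewrite fixed.
have [fixed|moved] := eqVneq (f (iter n f z)) (iter n f z); first by left; rewrite fixed.
right; rewrite addnS -addSn (leq_trans _ IH) // leq_add2r.
exact: rank_f (elimN eqP moved).
Qed.

Lemma sqle_refl X : sqle le X X.
Proof. by apply/sqleP => a aX; exists a; rewrite ?le_refl. Qed.

Lemma sqle_trans X Y Z : sqle le X Y -> sqle le Y Z -> sqle le X Z.
Proof.
move=> /sqleP XY /sqleP YZ; apply/sqleP => a /XY [b /YZ [c cZ bc] ab].
by exists c; last exact: le_trans bc.
Qed.

Lemma antichain_sqle_anti X Y :
    {in X &, forall a b, le a b -> a = b} -> {in Y &, forall a b, le a b -> a = b} ->
  sqle le X Y -> sqle le Y X -> X = Y.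
Proof.
suff sub (U V : {set T}) : {in U &, forall a b, le a b -> a = b} ->
    sqle le U V -> sqle le V U -> U \subset V.
  by move=> X_anti Y_anti XY YX; apply/eqP; rewrite eqEsubset !sub.
move=> U_anti /sqleP UV /sqleP VU; apply/subsetP => a aU.
have [b bV ab] := UV a aU; have [c cU bc] := VU b bV.
have ac : a = c := U_anti _ _ aU cU (le_trans ab bc).
by rewrite (le_anti ab); last by rewrite ac.
Qed.

Lemma node_of_Int_eq X Y N N' z : [disjoint X & Y] ->
  node_of le X Y N -> node_of le X Y N' -> z \in Int le N -> z \in Int le N' -> N = N'.
Proof.
move=> XY_disj N_node N'_node /IntP [[a aN az] _] /IntP [_ [b bN' zb]].
apply: (node_of_eq N_node N'_node aN bN'); rewrite /lt (le_trans az zb) andbT.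
apply: contraTneq (node_of_in2 N'_node bN') => <-.
by rewrite (disjointFr XY_disj (node_of_in1 N_node aN)).
Qed.

Lemma node_of_in2_Int X Y N b : Y \subset up le X -> [disjoint X & Y] ->
  node_of le X Y N -> b \in N.2 -> b \in Int le N.
Proof.
move=> /subsetP Y_up XY_disj N_node bN; apply/IntP; split; last by exists b; rewrite ?le_refl.
have /Y_up := node_of_in2 N_node bN; rewrite inE => /exists_inP [a aX ab].
exists a => //; apply: (node_of_adj1 N_node bN aX); rewrite /lt ab andbT.
by apply: contraTneq aX => ->; rewrite (disjointFl XY_disj (node_of_in2 N_node bN)).
Qed.

Lemma node_of_edge X Y N : sqle le X Y -> Y \subset up le X -> [disjoint X & Y] ->
  node_of le X Y N -> exists a b, [/\ a \in N.1, b \in N.2 & le a b].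
Proof.
move=> /sqleP XY Y_up XY_disj N_node.
have [c /setUP [cX|cY] [N1 N2]] := N_node.
  have [b bY cb] := XY c cX; have cN : c \in N.1 by rewrite N1 !inE cX connect0.
  exists c, b; split => //; apply: (node_of_adj2 N_node cN bY); rewrite /lt cb andbT.
  by apply: contraTneq cX => ->; rewrite (disjointFl XY_disj bY).
have cN : c \in N.2 by rewrite N2 !inE cY connect0.
have /IntP [[a aN ac] _] := node_of_in2_Int Y_up XY_disj N_node cN.
by exists a, c.
Qed.

Lemma node_of_lift X Y Z M :
    sqle le X Y -> sqle le Y Z -> [disjoint X & Z] -> node_of le X Y M ->
  exists2 P, node_of le X Z P &
    M.1 \subset P.1 /\ forall b, b \in M.2 -> exists2 y, y \in P.2 & le b y.
Proof.
move=> XY YZ XZ_disj [c cXY [M1 M2]].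
pose big := bip_adj le X Z.
have big_edge a y : a \in X -> y \in Z -> le a y -> big a y.
  move=> aX yZ ay; rewrite /big /bip_adj aX yZ /lt ay /=; apply/orP; left; rewrite andbT.
  by apply: contraTneq aX => ->; rewrite (disjointFl XZ_disj yZ).
have [y0 y0Z c_y0] : exists2 y0, y0 \in Z & le c y0.
  by case/setUP: cXY; apply/sqleP; [exact: sqle_trans YZ|].
pose P := (X :&: [set v | connect big y0 v], Z :&: [set v | connect big y0 v]).
pose below_P v := exists2 y, y \in Z & le v y && connect big y0 y.
have M_below v : connect (bip_adj le X Y) c v -> below_P v.
  apply: (@connect_inv _ _ below_P); last by exists y0; rewrite // c_y0 connect0.
  move=> a b [y yZ /andP [ay y0_y]] /orP [/andP [/andP [aX bY] ab]|/andP [/andP [bX aY] ba]].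
    have [y' y'Z b_y'] := sqleP _ _ YZ b bY; exists y'; rewrite // b_y'.
    have y_a : big y a by rewrite /big bip_adjC; exact: big_edge _ _ aX yZ ay.
    have a_y' : big a y' := big_edge _ _ aX y'Z (le_trans (ltW ab) b_y').
    exact: connect_trans y0_y (connect_trans (connect1 y_a) (connect1 a_y')).
  by exists y; rewrite // (le_trans (ltW ba) ay).
exists P; first by exists y0; rewrite // inE y0Z orbT.
split=> [|b]; last first.
  rewrite M2 => /setIP [bY]; rewrite inE => /M_below [y yZ /andP [b_y y0_y]].
  by exists y; rewrite // !inE yZ.
apply/subsetP => a; rewrite M1 => /setIP [aX]; rewrite inE => /M_below [y yZ /andP [ay y0_y]].
rewrite !inE aX (connect_trans y0_y) // connect1 // /big bip_adjC.
exact: big_edge _ _ aX yZ ay.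
Qed.

Lemma node_of_extend_up X Y Z M :
    sqle le X Y -> sqle le Y Z -> Y \subset up le X ->
    [disjoint X & Y] -> [disjoint X & Z] -> [disjoint Y & Z] ->
    {in Y &, forall a b, le a b -> a = b} ->
  node_of le X Y M -> exists P, node_of le X Z P /\ Int le M \proper Int le P.
Proof.
move=> XY YZ Y_up XY_disj XZ_disj YZ_disj Y_anti M_node.
have [P P_node [/subsetP M1_P M2_P]] := node_of_lift XY YZ XZ_disj M_node.
have [a [b [aM bM ab]]] := node_of_edge XY Y_up XY_disj M_node.
have [y yP b_y] := M2_P b bM.
exists P; split => //; apply/properP; split.
  apply/subsetP => z /IntP [[a' a'M a'z] [b' b'M zb']]; apply/IntP; split.
    by exists a'; first exact: M1_P.
  by have [y' y'P b'y'] := M2_P b' b'M; exists y'; last exact: le_trans b'y'.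
exists y.
  by apply/IntP; split; [exists a; [exact: M1_P|exact: le_trans b_y]|exists y; rewrite ?le_refl].
apply/IntP => -[_ [b' b'M yb']].
have bb' := Y_anti _ _ (node_of_in2 M_node bM) (node_of_in2 M_node b'M) (le_trans b_y yb').
move: yP; rewrite -bb' in yb'; rewrite -(le_anti b_y yb') => /(node_of_in2 P_node) bZ.
by have := node_of_in2 M_node bM; rewrite (disjointFl YZ_disj bZ).
Qed.

End Poset.

Lemma node_of_extend_down (T : finType) (le : rel T) (X Y Z : {set T}) M :
    is_poset le -> Y \subset up le X -> Z \subset up le Y -> sqle le Y Z ->
    [disjoint X & Y] -> [disjoint X & Z] -> [disjoint Y & Z] ->
    {in Y &, forall a b, le a b -> a = b} ->
  node_of le Y Z M -> exists P, node_of le X Z P /\ Int le M \proper Int le P.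
Proof.
move=> [le_refl [le_anti le_trans]] Y_up Z_up YZ XY_disj XZ_disj YZ_disj Y_anti M_node.
have ge_po : is_poset (fun a b => le b a).
  split=> [a|]; first exact: le_refl.
  by split=> [a b|b a c ab bc]; [rewrite andbC; exact: le_anti|exact: le_trans bc ab].
have ZY_disj : [disjoint Z & Y] by rewrite disjoint_sym.
have ZX_disj : [disjoint Z & X] by rewrite disjoint_sym.
have YX_disj : [disjoint Y & X] by rewrite disjoint_sym.
have Y_anti_ge : {in Y &, forall a b, le b a -> a = b}.
  by move=> a b aY bY ba; rewrite (Y_anti b a).
have [P' [P'_node M_P']] := @node_of_extend_up T (fun a b => le b a) ge_po Z Y X (M.2, M.1)
  Z_up Y_up YZ ZY_disj ZX_disj YX_disj Y_anti_ge (node_of_dual M_node).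
exists (P'.2, P'.1); split; first exact: (node_of_dual (le := le) P'_node).
by move: M_P'; rewrite !(@Int_dual T le); case: M M_node.
Qed.

Section RegularPoset.
Variables (T : finType) (le : rel T) (k : nat) (A : nat -> {set T}).
Hypotheses (le_po : is_poset le) (A_reg : regular_poset le k A) (width_gt0 : 0 < width le).
Implicit Types (N M P : {set T} * {set T}).

Local Notation idx := (idx k).
Local Notation consec := (consec le A).

Lemma level_antichain i : idx i -> {in A i &, forall a b, le a b -> a = b}.
Proof. by case: A_reg => _ [A_max _] /A_max /andP [/antichainP]. Qed.

Lemma card_level i : idx i -> #|A i| = width le.
Proof. by case: A_reg => _ [A_max _] /A_max /andP [_ /eqP]. Qed.

Lemma level_eq i j a : idx i -> idx j -> a \in A i -> a \in A j -> i = j.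
Proof.
case: A_reg => _ [_ [A_disj _]] ii ij aAi aAj; have [//|ij_neq] := eqVneq i j.
by rewrite (disjointFr (A_disj i j ii ij ij_neq) aAi) in aAj.
Qed.

Lemma level_of a : exists2 i, idx i & a \in A i.
Proof. by case: A_reg => _ [_ [_ [cover _]]]; apply: cover. Qed.

Lemma level_total i j : idx i -> idx j -> sqle le (A i) (A j) \/ sqle le (A j) (A i).
Proof. by case: A_reg => _ [_ [_ [_ [total _]]]]; apply: total. Qed.

Lemma idx1 : idx 1.
Proof. by case: A_reg => k2 _; rewrite /idx (leq_trans _ k2). Qed.

Lemma idx2 : idx 2.
Proof. by case: A_reg. Qed.

Lemma level_bot_top i : idx i -> sqle le (A 1) (A i) /\ sqle le (A i) (A 2).
Proof. by case: A_reg => _ [_ [_ [_ [_ [bot_top _]]]]]; apply: bot_top. Qed.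

Lemma level_nonempty i : idx i -> exists a, a \in A i.
Proof. by move=> ii; apply/card_gt0P; rewrite card_level. Qed.

Lemma level_inj i j : idx i -> idx j -> A i = A j -> i = j.
Proof.
move=> ii ij Aij; have [a aAi] := level_nonempty ii.
by apply: (level_eq ii ij aAi); rewrite -Aij.
Qed.

Lemma level_sqle_anti i j : idx i -> idx j ->
  sqle le (A i) (A j) -> sqle le (A j) (A i) -> A i = A j.
Proof.
by move=> ii ij; apply: (antichain_sqle_anti le_po (level_antichain ii) (level_antichain ij)).
Qed.

(* Otherwise a point of [A j] with nothing of [A i] below it would extend the
   maximum antichain [A i]. *)
Lemma level_up_cover i j : idx i -> idx j -> sqle le (A i) (A j) -> A j \subset up le (A i).
Proof.
move=> ii ij /sqleP Aij; apply/subsetP => b bAj; rewrite inE.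
apply: contraT => /exists_inPn not_below.
have bAi : b \notin A i by apply/negP => /not_below; rewrite (le_refl le_po).
have : antichain le (b |: A i).
  apply/antichainP => x y; rewrite !inE.
  move=> /predU1P [-> | xAi] /predU1P [-> | yAi] xy //.
  - have [c cAj yc] := Aij y yAi.
    have bc : b = c := level_antichain ij bAj cAj (le_trans le_po xy yc).
    by move: (not_below y yAi); rewrite bc yc.
  - by move: (not_below x xAi); rewrite xy.
  - exact: (level_antichain ii xAi yAi xy).
move/antichain_card_le; rewrite cardsU1 bAi card_level //.
by rewrite add1n ltnn.
Qed.

Lemma level_le_sqle i j a b : idx i -> idx j -> a \in A i -> b \in A j -> le a b ->
  sqle le (A i) (A j).
Proof.
move=> ii ij aAi bAj ab; case: (level_total ii ij) => // /sqleP /(_ b bAj) [c cAi bc].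
have ac : a = c := level_antichain ii aAi cAi (le_trans le_po ab bc).
rewrite -ac in bc; rewrite (level_eq ii ij aAi); last by rewrite (le_anti le_po ab bc).
exact: sqle_refl le_po _.
Qed.

Lemma sqlt_disjoint i j : idx i -> idx j -> sqlt le (A i) (A j) -> [disjoint A i & A j].
Proof.
case: A_reg => _ [_ [A_disj _]] ii ij /andP [_ Aij_neq].
by apply: (A_disj i j ii ij); apply: contra_neq Aij_neq => ->.
Qed.

Lemma sqlt_lt i j a b : idx i -> idx j -> sqlt le (A i) (A j) ->
  a \in A i -> b \in A j -> le a b -> lt le a b.
Proof.
move=> ii ij Aij aAi bAj ab; rewrite /lt ab andbT.
by apply: contraTneq bAj => <-; rewrite (disjointFr (sqlt_disjoint ii ij Aij) aAi).
Qed.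

Lemma level_lt_sqlt i j a b : idx i -> idx j -> a \in A i -> b \in A j -> lt le a b ->
  sqlt le (A i) (A j).
Proof.
move=> ii ij aAi bAj /andP [a_neq_b ab]; rewrite /sqlt (level_le_sqle ii ij aAi bAj ab).
by apply: contra_neq a_neq_b => Aij; apply: (level_antichain ii aAi _ ab); rewrite Aij.
Qed.

Lemma sqlt_geF i j a b : idx i -> idx j -> sqlt le (A i) (A j) ->
  a \in A j -> b \in A i -> le a b = false.
Proof.
move=> ii ij /andP [Aij Aij_neq] aAj bAi; apply: contraNF Aij_neq => ab.
by apply/eqP/level_sqle_anti => //; apply: level_le_sqle ab.
Qed.

Lemma sqlt_le_trans i j l : idx i -> idx j -> idx l ->
  sqlt le (A i) (A j) -> sqle le (A j) (A l) -> sqlt le (A i) (A l).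
Proof.
move=> ii ij il /andP [Aij Aij_neq] Ajl; rewrite /sqlt (sqle_trans le_po Aij Ajl).
by apply: contra_neq Aij_neq => Ail; apply: level_sqle_anti; rewrite // Ail.
Qed.

Lemma sqle_lt_trans i j l : idx i -> idx j -> idx l ->
  sqle le (A i) (A j) -> sqlt le (A j) (A l) -> sqlt le (A i) (A l).
Proof.
move=> ii ij il Aij /andP [Ajl Ajl_neq]; rewrite /sqlt (sqle_trans le_po Aij Ajl).
by apply: contra_neq Ajl_neq => Ail; apply: level_sqle_anti; rewrite // -Ail.
Qed.

Lemma sqltNle i j : idx i -> idx j -> ~~ sqlt le (A i) (A j) -> sqle le (A j) (A i).
Proof.
move=> ii ij; rewrite /sqlt negb_and negbK.
case: (level_total ii ij) => [-> /= /eqP ->|//]; exact: sqle_refl.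
Qed.

Lemma card_down_lt i j : idx i -> idx j -> sqlt le (A i) (A j) ->
  #|down le (A i)| < #|down le (A j)|.
Proof.
move=> ii ij /andP [Aij Aij_neq]; apply/proper_card/properP; split.
  exact: (sqle_trans le_po (subxx _) Aij).
have [Aji|/subsetPn [b bAj b_notin]] := boolP (sqle le (A j) (A i)).
  by move: Aij_neq; rewrite (level_sqle_anti ii ij Aij Aji) eqxx.
by exists b; rewrite // inE; apply/exists_inP; exists b; rewrite ?(le_refl le_po).
Qed.

Lemma consec_idx t p s : t <= k -> consec t p s -> [/\ idx p, idx s & sqlt le (A p) (A s)].
Proof.
move=> tk [/andP [p1 pt] /andP [s1 st] ps _].
by rewrite /idx p1 s1 (leq_trans pt tk) (leq_trans st tk).
Qed.

Lemma consec_below t p s i : t <= k -> consec t p s -> 1 <= i <= t ->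
  sqlt le (A i) (A s) -> sqle le (A i) (A p).
Proof.
move=> tk cps /andP [i1 it] i_s; have [ip _ _] := consec_idx tk cps.
have ii : idx i by rewrite /idx i1 (leq_trans it tk).
apply: sqltNle => //; apply/negP => pi; case: cps => _ _ _; apply.
by exists i; rewrite i1 it.
Qed.

Lemma consec_above t p s i : t <= k -> consec t p s -> 1 <= i <= t ->
  sqlt le (A p) (A i) -> sqle le (A s) (A i).
Proof.
move=> tk cps /andP [i1 it] pi; have [_ iS _] := consec_idx tk cps.
have ii : idx i by rewrite /idx i1 (leq_trans it tk).
apply: sqltNle => //; apply/negP => i_s; case: cps => _ _ _; apply.
by exists i; rewrite i1 it.
Qed.

Lemma consec_pred_uniq t p p' s : t <= k -> consec t p s -> consec t p' s -> p = p'.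
Proof.
move=> tk cps cp's; have [ip _ ps] := consec_idx tk cps; have [ip' _ p's] := consec_idx tk cp's.
have [[p_t _ _ _] [p'_t _ _ _]] := (cps, cp's).
by apply: level_inj => //; apply: level_sqle_anti => //; [apply: consec_below cp's _ _|
  apply: consec_below cps _ _].
Qed.

Lemma consec_succ_exists t p j : t <= k -> 1 <= p <= t -> 1 <= j <= t ->
  sqlt le (A p) (A j) -> exists s, consec t p s.
Proof.
move=> tk pt /andP [j1 jt] pj; have jt' : j < t.+1 by [].
pose above (q : 'I_t.+1) := (0 < q) && sqlt le (A p) (A q).
have [|s /andP [s1 ps] s_min] :=
  arg_minnP (fun q : 'I_t.+1 => #|down le (A q)|) (_ : above (Ordinal jt')).
  by rewrite /above j1.
exists s; split => //; first by rewrite s1 -ltnS ltn_ord.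
case=> q [/andP [q1 qt] pq qs].
have iq : idx q by rewrite /idx q1 (leq_trans qt tk).
have i_s : idx s by rewrite /idx s1 -ltnS (leq_trans (ltn_ord s)).
have q_above : above (Ordinal (qt : q < t.+1)) by rewrite /above q1 pq.
have := s_min _ q_above.
by rewrite leqNgt (card_down_lt iq i_s qs).
Qed.

Lemma consec_pred_exists t s j : t <= k -> 1 <= s <= t -> 1 <= j <= t ->
  sqlt le (A j) (A s) -> exists p, consec t p s.
Proof.
move=> tk st /andP [j1 jt] js; have jt' : j < t.+1 by [].
pose below (q : 'I_t.+1) := (0 < q) && sqlt le (A q) (A s).
have [|p /andP [p1 ps] p_max] :=
  arg_maxnP (fun q : 'I_t.+1 => #|down le (A q)|) (_ : below (Ordinal jt')).
  by rewrite /below j1.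
exists p; split => //; first by rewrite p1 -ltnS ltn_ord.
case=> q [/andP [q1 qt] pq qs].
have iq : idx q by rewrite /idx q1 (leq_trans qt tk).
have ip : idx p by rewrite /idx p1 -ltnS (leq_trans (ltn_ord p)).
have q_below : below (Ordinal (qt : q < t.+1)) by rewrite /below q1 qs.
have qp := p_max _ q_below.
by have := leq_ltn_trans qp (card_down_lt ip iq pq); rewrite ltnn.
Qed.

Lemma consec_matching p s : consec k p s -> exists f, perfect_matching le (A p) (A s) f.
Proof.
move=> cps; have [ip i_s ps] := consec_idx (leqnn k) cps.
have [a aAp] := level_nonempty ip.
have [b bAs ab] := sqleP _ _ _ (proj1 (andP ps)) a aAp.
case: A_reg => k2 [_ [_ [_ [_ [_ [_ A_regular]]]]]].
have [|f [f_match _]] := A_regular k p s _ cps a b aAp bAs (sqlt_lt ip i_s ps aAp bAs ab).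
  by rewrite k2 leqnn.
by exists f.
Qed.

(* The perfect matchings between consecutive levels of the final stage, glued into
   one map. *)
Definition climbing (g : T -> T) : Prop :=
  [/\ {in A 2, forall z, g z = z}, {in ~: A 2 &, injective g} &
      forall z, z \notin A 2 ->
        exists i j, [/\ consec k i j, z \in A i, g z \in A j & lt le z (g z)]].

Lemma climbing_exists : exists g, climbing g.
Proof.
have [lev levP] : exists lev : T -> nat, forall z, idx (lev z) /\ z \in A (lev z).
  apply: (functional_choice (fun z i => idx i /\ z \in A i)) => z.
  by have [i ii zAi] := level_of z; exists i.
have [F FP] : exists F : nat -> nat * (T -> T), forall i, idx i -> i != 2 ->
    consec k i (F i).1 /\ perfect_matching le (A i) (A (F i).1) (F i).2.
  apply: (functional_choice (fun i (Fi : nat * (T -> T)) => idx i -> i != 2 ->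
    consec k i Fi.1 /\ perfect_matching le (A i) (A Fi.1) Fi.2)) => i.
  have [/andP [ii i2]|not_ii] := boolP (idx i && (i != 2)); last first.
    by exists (0, id) => ii i2; rewrite ii i2 in not_ii.
  have i2_lt : sqlt le (A i) (A 2).
    by rewrite /sqlt (level_bot_top ii).2 (contra_neq (level_inj ii idx2) i2).
  have [s cis] := consec_succ_exists (leqnn k) ii idx2 i2_lt.
  by have [f f_match] := consec_matching cis; exists (s, f).
exists (fun z => if z \in A 2 then z else (F (lev z)).2 z); split.
- by move=> z ->.
- move=> z z'; rewrite !inE => /negbTE z2 /negbTE z'2; rewrite z2 z'2.
  have [[iz zA] [iz' z'A]] := (levP z, levP z').
  have lz2 : lev z != 2 by apply: contraFneq z2 => <-.
  have lz'2 : lev z' != 2 by apply: contraFneq z'2 => <-.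
  have [[cz fz] [cz' fz']] := (FP _ iz lz2, FP _ iz' lz'2).
  move=> g_eq; have [_ i_next _] := consec_idx (leqnn k) cz.
  have [_ i_next' _] := consec_idx (leqnn k) cz'.
  have next_eq : (F (lev z)).1 = (F (lev z')).1.
    by apply: (level_eq i_next i_next' (perfect_matching_in fz zA)); rewrite g_eq;
      exact: perfect_matching_in fz' z'A.
  rewrite -next_eq in cz' fz'; have lev_eq := consec_pred_uniq (leqnn k) cz cz'.
  by rewrite -lev_eq in fz' z'A g_eq; apply: (perfect_matching_inj fz).
- move=> z /negbTE z2; rewrite z2; have [iz zA] := levP z.
  have lz2 : lev z != 2 by apply: contraFneq z2 => <-.
  have [cz fz] := FP _ iz lz2.
  exists (lev z), (F (lev z)).1; split => //; first exact: perfect_matching_in fz zA.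
  exact: perfect_matching_lt fz zA.
Qed.

Lemma level_node_top_Int p s N b : idx p -> idx s -> sqlt le (A p) (A s) ->
  node_of le (A p) (A s) N -> b \in N.2 -> b \in Int le N.
Proof.
move=> ip i_s ps; have ps_le := proj1 (andP ps).
exact: (node_of_in2_Int le_po (level_up_cover ip i_s ps_le) (sqlt_disjoint ip i_s ps)).
Qed.

Lemma level_node_Int_eq p s N N' z : idx p -> idx s -> sqlt le (A p) (A s) ->
  node_of le (A p) (A s) N -> node_of le (A p) (A s) N' ->
  z \in Int le N -> z \in Int le N' -> N = N'.
Proof. by move=> ip i_s ps; apply: (node_of_Int_eq le_po (sqlt_disjoint ip i_s ps)). Qed.

Lemma child_Int_sub M P : child le k A M P -> Int le M \subset Int le P.
Proof. by case=> t [p [s [_ [_ [_ [_ [_ [_ /proper_sub]]]]]]]]. Qed.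

Lemma parent_of_new_top t q r M : t <= k -> consec t q r -> node_of le (A q) (A r) M ->
    q < r -> 2 < r ->
  exists s' P, [/\ consec r.-1 q s', node_of le (A q) (A s') P, child le k A M P
    & sqlt le (A r) (A s')].
Proof.
move=> tk cqr M_node qr_lt r3; have [iq ir qr] := consec_idx tk cqr.
have [_ /andP [_ rt] _ no_between] := cqr; have [/andP [q1 _] /andP [_ rk]] := (iq, ir).
have q2 : sqlt le (A q) (A 2) := sqlt_le_trans iq ir idx2 qr (level_bot_top ir).2.
have [|||s' cqs'] := @consec_succ_exists r.-1 q 2 _ _ _ q2; try lia.
have [_ is' qs'] := consec_idx (leq_trans (leq_pred r) rk) cqs'.
have [_ /andP [s'1 s'r1] _ _] := cqs'.
have rs' : sqlt le (A r) (A s').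
  apply: contraT => /(sqltNle ir is') s'r; case: no_between; exists s'.
  split => //; first lia.
  by rewrite /sqlt s'r (contra_neq (level_inj is' ir)) // neq_ltn; apply/orP; left; lia.
have [P [P_node MP]] := node_of_extend_up le_po (proj1 (andP qr)) (proj1 (andP rs'))
  (level_up_cover iq ir (proj1 (andP qr))) (sqlt_disjoint iq ir qr) (sqlt_disjoint iq is' qs')
  (sqlt_disjoint ir is' rs') (level_antichain ir) M_node.
exists s', P; split => //; exists r, q, s'; split; first lia.
by do 4!split => //; left.
Qed.

Lemma parent_of_new_bottom t q r M : t <= k -> consec t q r -> node_of le (A q) (A r) M ->
    r < q -> 2 < q ->
  exists p' P, [/\ consec q.-1 p' r, node_of le (A p') (A r) P, child le k A M P
    & sqlt le (A p') (A q)].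
Proof.
move=> tk cqr M_node rq_lt q3; have [iq ir qr] := consec_idx tk cqr.
have [/andP [_ qt] _ _ no_between] := cqr; have [/andP [_ qk] /andP [r1 _]] := (iq, ir).
have r1_lt : sqlt le (A 1) (A r) := sqle_lt_trans idx1 iq ir (level_bot_top iq).1 qr.
have [|||p' cp'r] := @consec_pred_exists q.-1 r 1 _ _ _ r1_lt; try lia.
have [ip' _ p'r] := consec_idx (leq_trans (leq_pred q) qk) cp'r.
have [/andP [p'1 p'q1] _ _ _] := cp'r.
have p'q : sqlt le (A p') (A q).
  apply: contraT => /(sqltNle ip' iq) qp'; case: no_between; exists p'.
  split => //; first lia.
  by rewrite /sqlt qp' (contra_neq (level_inj iq ip')) // neq_ltn; apply/orP; right; lia.
have [P [P_node MP]] := node_of_extend_down le_po (level_up_cover ip' iq (proj1 (andP p'q)))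
  (level_up_cover iq ir (proj1 (andP qr))) (proj1 (andP qr)) (sqlt_disjoint ip' iq p'q)
  (sqlt_disjoint ip' ir p'r) (sqlt_disjoint iq ir qr) (level_antichain iq) M_node.
exists p', P; split => //; exists q, p', r; split; first lia.
by do 4!split => //; right.
Qed.

Lemma parent_step t q r M : t <= k -> consec t q r -> node_of le (A q) (A r) M ->
    2 < maxn q r ->
  exists q' r' P, [/\ consec (maxn q r).-1 q' r', node_of le (A q') (A r') P,
    child le k A M P, sqle le (A q') (A q) & sqle le (A r) (A r')].
Proof.
move=> tk cqr M_node; have [_ _ qr] := consec_idx tk cqr.
have [qr_lt|rq_lt|qr_eq] := ltngtP q r; last by move: qr; rewrite /sqlt qr_eq eqxx andbF.
  move=> r3.
  have [s' [P [cqs' P_node MP rs']]] := parent_of_new_top tk cqr M_node qr_lt r3.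
  by exists q, s', P; rewrite (sqle_refl le_po) (proj1 (andP rs')).
move=> q3.
have [p' [P [cp'r P_node MP p'q]]] := parent_of_new_bottom tk cqr M_node rq_lt q3.
by exists p', r, P; rewrite (sqle_refl le_po) (proj1 (andP p'q)).
Qed.

(* Climbing the node tree from [M] one stage at a time keeps the nodes between the
   levels of [N] and through [z]; the climb stops exactly at [N]. *)
Lemma proper_ancestor_nested t p s N z t' q r M :
    2 <= t <= k -> consec t p s -> node_of le (A p) (A s) N -> z \in Int le N ->
    t' <= k -> consec t' q r -> node_of le (A q) (A r) M -> z \in Int le M ->
    sqle le (A p) (A q) -> sqle le (A r) (A s) -> (q, r) != (p, s) ->
  proper_ancestor le k A N M.
Proof.
move=> /andP [t2 tk] cps N_node zN.
elim/ltn_ind: t' q r M => t' IH q r M t'k cqr M_node zM pq rs qr_ps.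
have [[ip i_s ps] [iq ir qr]] := (consec_idx tk cps, consec_idx t'k cqr).
have [/andP [p1 pt] /andP [s1 st] _ no_between] := cps.
have [/andP [q1 qt'] /andP [r1 rt'] _ _] := cqr.
have t_lt_m : t < maxn q r.
  rewrite ltnNge geq_max; apply/negP => /andP [qt rt]; case: no_between.
  have [qp|qp] := eqVneq q p.
    have rs_neq : r != s by move: qr_ps; rewrite qp xpair_eqE eqxx.
    exists r; split; [by rewrite r1 rt|by rewrite -qp|].
    by rewrite /sqlt rs (contra_neq (level_inj ir i_s) rs_neq).
  exists q; split; [by rewrite q1 qt| |exact: sqlt_le_trans iq ir i_s qr rs].
  by rewrite /sqlt pq (contra_neq (level_inj ip iq)) // eq_sym.
have [q' [r' [P [cP P_node MP q'q rr']]]] := parent_step t'k cqr M_node (leq_ltn_trans t2 t_lt_m).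
have [/andP [_ qk] /andP [_ rk]] := (iq, ir).
have m_k : (maxn q r).-1 <= k by rewrite (leq_trans (leq_pred _)) // geq_max qk rk.
have t_m : t <= (maxn q r).-1 by rewrite -ltnS (ltn_predK t_lt_m).
have m_t' : (maxn q r).-1 < t' by rewrite (ltn_predK t_lt_m) geq_max qt' rt'.
have [iq' ir' _] := consec_idx m_k cP.
have zP : z \in Int le P := subsetP (child_Int_sub MP) z zM.
have pq' : sqle le (A p) (A q').
  apply: consec_below m_k cP _ _; first by rewrite p1 (leq_trans pt t_m).
  exact: sqle_lt_trans ip iq ir' pq (sqlt_le_trans iq ir ir' qr rr').
have r's : sqle le (A r') (A s).
  apply: consec_above m_k cP _ _; first by rewrite s1 (leq_trans st t_m).
  exact: sqle_lt_trans iq' iq i_s q'q (sqlt_le_trans iq ir i_s qr rs).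
have [[eq_q' eq_r']|ne] := eqVneq (q', r') (p, s).
  subst q' r'; rewrite -(level_node_Int_eq ip i_s ps P_node N_node zP zN).
  exact: t_step MP.
apply: (t_trans _ _ _ P); first exact: t_step MP.
exact: (IH _ m_t' q' r' P m_k cP P_node zP pq' r's ne).
Qed.

Section ActiveFamily.
Variables (R : {set T} * {set T} -> {set T}) (u : nat) (sur : option nat).
Variable S : {set {set T} * {set T}}.
Hypothesis R_clique :
  forall N, active le k A N -> dclique le N.1 N.2 (ceil_sqrt (width le)) (R N).
Hypothesis S_active : forall N, N \in S -> active le k A N /\ has_char le N (u, sur).
Hypothesis S_antichain : forall N K, N \in S -> K \in S -> N <> K -> ~ lt_us le R N K.

Lemma S_node N : N \in S -> exists t p s,
  [/\ 2 <= t <= k, consec t p s, node_of le (A p) (A s) N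
    & [/\ idx p, idx s & sqlt le (A p) (A s)]].
Proof.
case/S_active => [[[t [p [s [tk cps N_node]]]] _ _] _]; exists t, p, s; split => //.
by apply: consec_idx cps; case/andP: tk.
Qed.

Lemma S_no_ancestor N M : N \in S -> M \in S -> ~ proper_ancestor le k A N M.
Proof.
move=> NS /S_active [[_ _ no_anc] M_char] anc.
exact: no_anc anc M_char (S_active NS).2.
Qed.

Lemma S_node_disjoint N : N \in S -> [disjoint N.1 & N.2].
Proof.
case/S_node => t [p [s [_ _ N_node [ip i_s ps]]]].
have N1 : N.1 \subset A p by apply/subsetP => a; apply: node_of_in1 N_node.
have N2 : N.2 \subset A s by apply/subsetP => b; apply: node_of_in2 N_node.
exact: disjointWl N1 (disjointWr N2 (sqlt_disjoint ip i_s ps)).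
Qed.

(* Otherwise [N] and [M] have nested levels and a common interior point, so one would
   be a proper ancestor of the other. *)
Lemma S_tops_disjoint N M b : N \in S -> M \in S -> b \in N.2 -> b \in M.2 -> N = M.
Proof.
move=> NS MS bN bM.
have [tN [pN [sN [tN_k cN N_node [ipN isN psN]]]]] := S_node NS.
have [tM [pM [sM [tM_k cM M_node [ipM isM psM]]]]] := S_node MS.
have sNM := level_eq isN isM (node_of_in2 N_node bN) (node_of_in2 M_node bM); subst sM.
have bIntN := level_node_top_Int ipN isN psN N_node bN.
have bIntM := level_node_top_Int ipM isN psM M_node bM.
have [pNM|pNM] := eqVneq pN pM.
  by subst pM; apply: level_node_Int_eq ipN isN psN N_node M_node bIntN bIntM.
have [_ tMk] := andP tM_k; have [_ tNk] := andP tN_k.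
case: (level_total ipN ipM) => pp.
  case: (S_no_ancestor NS MS).
  apply: (proper_ancestor_nested tN_k cN N_node bIntN tMk cM M_node bIntM pp).
    exact: sqle_refl.
  by rewrite xpair_eqE eqxx andbT eq_sym.
case: (S_no_ancestor MS NS).
apply: (proper_ancestor_nested tM_k cM M_node bIntM tNk cN N_node bIntN pp).
  exact: sqle_refl.
by rewrite xpair_eqE eqxx andbT.
Qed.

Definition inner M := Int le M :\: (M.1 :|: M.2).

(* Otherwise the levels of [N] would be nested inside those of [M] with [y] in both
   interiors, making [M] a proper ancestor of [N]. *)
Lemma S_top_not_inner N M y : N \in S -> M \in S -> y \in N.2 -> y \notin inner M.
Proof.
move=> NS MS yN; apply/negP => /setDP [yIntM]; rewrite inE negb_or => /andP [yM1 yM2].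
have [tN [pN [sN [tN_k cN N_node [ipN isN psN]]]]] := S_node NS.
have [tM [pM [sM [tM_k cM M_node [ipM isM psM]]]]] := S_node MS.
have /IntP [[x xM xy] [b bM yb]] := yIntM.
have yA := node_of_in2 N_node yN.
have pM_sN : sqlt le (A pM) (A sN).
  apply: (level_lt_sqlt ipM isN (node_of_in1 M_node xM) yA).
  by rewrite /lt xy andbT; apply: contraNneq yM1 => <-.
have sN_sM : sqlt le (A sN) (A sM).
  apply: (level_lt_sqlt isN isM yA (node_of_in2 M_node bM)).
  by rewrite /lt yb andbT; apply: contraNneq yM2 => ->.
have [/andP [_ tMk] /andP [_ tNk]] := (tM_k, tN_k).
have tM_sN : tM < sN.
  rewrite ltnNge; apply/negP => sN_tM; case: (cM) => /andP [pM1 pM_tM] _ _; apply.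
  by exists sN; rewrite sN_tM andbT; case/andP: isN => -> _.
have pM_pN : sqle le (A pM) (A pN).
  apply: (consec_below tNk cN _ pM_sN); have [_ /andP [_ sN_tN] _ _] := cN.
  have [/andP [pM1 pM_tM] _ _ _] := cM.
  by rewrite pM1 (leq_trans pM_tM (ltnW (leq_trans tM_sN sN_tN))).
case: (S_no_ancestor MS NS).
apply: (proper_ancestor_nested tM_k cM M_node yIntM tNk cN N_node
  (level_node_top_Int ipN isN psN N_node yN) pM_pN (proj1 (andP sN_sM))).
rewrite xpair_eqE negb_and orbC; apply/orP; left.
by apply: contraTneq sN_sM => ->; rewrite /sqlt eqxx andbF.
Qed.

Definition bot N := R N :&: N.1.
Definition top N := R N :&: N.2.

Lemma clique_split N : N \in S -> [/\ R N = bot N :|: top N, #|top N| = ceil_sqrt (width le)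
  & exists f, perfect_matching le N.1 N.2 f /\ f @: bot N = top N].
Proof.
move=> NS; have N_disj := S_node_disjoint NS.
have [Cx [Cy [[Cx_sub Cy_sub _ card_Cy RN] [_ [f [f_match f_Cx]]]]]] := R_clique (S_active NS).1.
have bot_Cx : bot N = Cx.
  rewrite /bot RN setIUl (setIidPl Cx_sub) (disjoint_setI0 (disjointWl Cy_sub _)) ?setU0 //.
  by rewrite disjoint_sym.
have top_Cy : top N = Cy.
  by rewrite /top RN setIUl (setIidPl Cy_sub) (disjoint_setI0 (disjointWl Cx_sub N_disj)) set0U.
by rewrite bot_Cx top_Cy; split => //; exists f.
Qed.

Lemma S_top_maximal N y : N \in S -> y \in top N -> maximal_in le (R N) y.
Proof.
move=> NS /setIP [yR yN]; split => // v; have [-> _ _] := clique_split NS.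
have [t [p [s [_ _ N_node [ip i_s ps]]]]] := S_node NS.
have yA := node_of_in2 N_node yN.
case/setUP => /setIP [_ vN] yv.
  by rewrite (sqlt_geF ip i_s ps yA (node_of_in1 N_node vN)) in yv.
exact/esym/(level_antichain i_s yA (node_of_in2 N_node vN) yv).
Qed.

Lemma S_bot_minimal N x : N \in S -> x \in bot N -> minimal_in le (R N) x.
Proof.
move=> NS /setIP [xR xN]; split => // v; have [-> _ _] := clique_split NS.
have [t [p [s [_ _ N_node [ip i_s ps]]]]] := S_node NS.
have xA := node_of_in1 N_node xN.
case/setUP => /setIP [_ vN] vx.
  exact: (level_antichain ip (node_of_in1 N_node vN) xA vx).
by rewrite (sqlt_geF ip i_s ps (node_of_in2 N_node vN) xA) in vx.
Qed.

Lemma S_top_not_below_bot N N' y x : N \in S -> N' \in S ->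
  y \in top N' -> x \in bot N -> ~ le y x.
Proof.
move=> NS N'S yN' xN yx; have [N'_eq|N'N] := eqVneq N' N.
  subst N'.
  have [t [p [s [_ _ N_node [ip i_s ps]]]]] := S_node NS.
  have [/setIP [_ yN] /setIP [_ xN1]] := (yN', xN).
  by rewrite (sqlt_geF ip i_s ps (node_of_in2 N_node yN) (node_of_in1 N_node xN1)) in yx.
apply: (S_antichain N'S NS (elimN eqP N'N)); exists y, x.
by split => //; [exact: S_top_maximal|exact: S_bot_minimal].
Qed.

Lemma clique_matchings_exist : exists fN : {set T} * {set T} -> T -> T,
  forall N, N \in S -> perfect_matching le N.1 N.2 (fN N) /\ fN N @: bot N = top N.
Proof.
apply: (functional_choice (fun N f => N \in S ->
  perfect_matching le N.1 N.2 f /\ f @: bot N = top N)) => N.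
have [NS|N_notin] := boolP (N \in S); last by exists id => NS; case/negP: N_notin.
by have [_ _ [f f_match]] := clique_split NS; exists f.
Qed.

Section Climbing.
Variables (g : T -> T) (fN : {set T} * {set T} -> T -> T).
Hypothesis g_climbing : climbing g.
Hypothesis fN_match :
  forall N, N \in S -> perfect_matching le N.1 N.2 (fN N) /\ fN N @: bot N = top N.

Definition step z := if [pick N in S | z \in N.1] is Some N then fN N z else g z.

Lemma stepP z :
  (exists2 N, N \in S & z \in N.1 /\ step z = fN N z) \/
  ((forall N, N \in S -> z \notin N.1) /\ step z = g z).
Proof.
rewrite /step; case: pickP => [N /andP [NS zN]|no_N]; first by left; exists N.
by right; split => // N NS; apply: contraFN (no_N N) => zN; rewrite NS zN.
Qed.

Lemma step_spec z : (step z = z /\ z \in A 2) \/ lt le z (step z).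
Proof.
have [g_fix _ g_next] := g_climbing.
case: (stepP z) => [[N NS [zN ->]]|[_ ->]].
  by right; apply: perfect_matching_lt (fN_match NS).1 zN.
have [z2|z2] := boolP (z \in A 2); first by left; rewrite g_fix.
by right; have [i [j [_ _ _ ->]]] := g_next z z2.
Qed.

Lemma step_le z : le z (step z).
Proof. by case: (step_spec z) => [[-> _]|/ltW //]; apply: (le_refl le_po). Qed.

Definition off_inner z := forall M, M \in S -> z \notin inner M.

(* The level of [z] lies between the two levels of [N], so [z] would lie in [inner N]. *)
Lemma climb_not_into_node z N : off_inner z -> (forall M, M \in S -> z \notin M.1) ->
  z \notin A 2 -> N \in S -> g z \in Int le N -> g z \notin N.1 -> False.
Proof.
move=> z_off z_out z2 NS /IntP [[x xN x_gz] [b bN gz_b]] gz_N1.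
have [_ _ g_next] := g_climbing; have [i [j [cij zAi gzAj z_gz]]] := g_next z z2.
have [t [p [s [_ _ N_node [ip i_s ps]]]]] := S_node NS.
have [ii ij _] := consec_idx (leqnn k) cij.
have [xA bA] := (node_of_in1 N_node xN, node_of_in2 N_node bN).
have pj : sqlt le (A p) (A j).
  apply: (level_lt_sqlt ip ij xA gzAj); rewrite /lt x_gz andbT.
  by apply: contraNneq gz_N1 => <-.
have /subsetP/(_ z zAi) := level_up_cover ip ii (consec_below (leqnn k) cij ip pj).
rewrite inE => /exists_inP [x' x'A x'z].
have z_b := le_trans le_po (ltW z_gz) gz_b.
have x'N : x' \in N.1.
  apply: (node_of_adj1 N_node bN x'A); exact: sqlt_lt ip i_s ps x'A bA (le_trans le_po x'z z_b).
have zIntN : z \in Int le N by apply/IntP; split; [exists x'|exists b].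
have /setUP [zN1|zN2] : z \in N.1 :|: N.2.
  by apply: contraNT (z_off N NS) => z_out12; apply/setDP.
  by move: (z_out N NS); rewrite zN1.
have zb := level_antichain i_s (node_of_in2 N_node zN2) bA z_b.
rewrite -zb in gz_b; have gz_z := le_anti le_po gz_b (ltW z_gz).
by move: z_gz; rewrite /lt gz_z eqxx.
Qed.

Lemma step_into_top N y z : N \in S -> y \in N.2 -> off_inner z -> z != y -> step z = y ->
  z \in N.1 /\ fN N z = y.
Proof.
move=> NS yN z_off zy; case: (stepP z) => [[M MS [zM ->]] fz|[z_out ->] gz].
  have yM : y \in M.2 by rewrite -fz; apply: perfect_matching_in (fN_match MS).1 zM.
  by rewrite -(S_tops_disjoint MS NS yM yN).
have [g_fix _ _] := g_climbing.
have [z2|z2] := boolP (z \in A 2); first by move: zy; rewrite -gz g_fix // eqxx.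
have [t [p [s [_ _ N_node [ip i_s ps]]]]] := S_node NS.
case: (climb_not_into_node z_off z_out z2 NS); rewrite gz.
  exact: level_node_top_Int ip i_s ps N_node yN.
by rewrite (disjointFl (S_node_disjoint NS) yN).
Qed.

Lemma step_off_inner z : off_inner z -> off_inner (step z).
Proof.
move=> z_off M MS; case: (stepP z) => [[N NS [zN ->]]|[z_out ->]].
  exact: S_top_not_inner NS MS (perfect_matching_in (fN_match NS).1 zN).
have [g_fix _ _] := g_climbing.
have [z2|z2] := boolP (z \in A 2); first by rewrite g_fix //; apply: z_off.
apply/negP => /setDP [gz_Int]; rewrite inE negb_or => /andP [gz_M1 _].
exact: climb_not_into_node z_off z_out z2 MS gz_Int gz_M1.
Qed.

Lemma step_inj z z' : off_inner z -> off_inner z' -> step z = step z' ->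
  [\/ z = z', step z = z | step z' = z'].
Proof.
move=> z_off z'_off e.
have [zz'|zz'] := eqVneq z z'; first by constructor 1.
have [fix_z|moved_z] := eqVneq (step z) z; first by constructor 2.
have [fix_z'|moved_z'] := eqVneq (step z') z'; first by constructor 3.
exfalso; rewrite eq_sym in moved_z; rewrite eq_sym in moved_z'.
case: (boolP [exists N in S, step z \in N.2]) => [/exists_inP [N NS zN]|/exists_inPn no_top].
  have [z1 fz] := step_into_top NS zN z_off moved_z erefl.
  rewrite e in zN; have [z'1 fz'] := step_into_top NS zN z'_off moved_z' erefl.
  by case/eqP: zz'; apply: (perfect_matching_inj (fN_match NS).1 z1 z'1); rewrite fz fz' e.
have [g_fix g_inj _] := g_climbing.
have climbs v : v != step v -> (forall N, N \in S -> step v \notin N.2) ->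
    v \in ~: A 2 /\ step v = g v.
  move=> moved_v v_no_top; case: (stepP v) => [[N NS [vN fv]]|[_ gv]].
    by move: (v_no_top N NS); rewrite fv (perfect_matching_in (fN_match NS).1 vN).
  rewrite inE gv; split => //; apply: contraNN moved_v => v2.
  by rewrite gv g_fix.
have [z2 gz] := climbs z moved_z no_top.
have [z'2 gz'] : z' \in ~: A 2 /\ step z' = g z'.
  by apply: climbs moved_z' _ => N NS; rewrite -e no_top.
by case/eqP: zz'; apply: g_inj; rewrite // -gz -gz'.
Qed.

Definition psi z := iter #|T| step z.

Lemma psi_top z : psi z \in A 2.
Proof.
case: (step_spec (psi z)) => [[_ //]|].
by rewrite /psi (iter_inflationary_fixed le_po z step_le) /lt eqxx.
Qed.

Lemma top_off_inner N y : N \in S -> y \in top N -> off_inner y.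
Proof. by move=> NS /setIP [_ yN] M MS; apply: S_top_not_inner NS MS yN. Qed.

Lemma iter_step_off_inner i z : off_inner z -> off_inner (iter i step z).
Proof. by elim: i => //= i IH /IH /step_off_inner. Qed.

(* The last step into [top N] comes from [bot N], which would then lie above the top
   point [y'] of [N']: this contradicts the antichain condition on [S]. *)
Lemma orbit_not_into_top N N' y y' i : N \in S -> N' \in S -> y \in top N -> y' \in top N' ->
  iter i step y' <> y -> step (iter i step y') = y -> False.
Proof.
move=> NS N'S yN y'N' /eqP z_y z_step; set z := iter i step y' in z_y z_step.
have z_off : off_inner z := iter_step_off_inner i (top_off_inner N'S y'N').
have [zN fz] := step_into_top NS (setIP yN).2 z_off z_y z_step.
have [f_match f_bot] := fN_match NS.
have z_bot : z \in bot N.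
  move: yN; rewrite -f_bot => /imsetP [x x_bot y_fx].
  have xN : x \in N.1 by case/setIP: x_bot.
  by rewrite (perfect_matching_inj f_match zN xN) // fz.
exact: S_top_not_below_bot NS N'S y'N' z_bot (iter_inflationary_le le_po i y' step_le).
Qed.

Lemma psi_inj N N' y y' : N \in S -> N' \in S -> y \in top N -> y' \in top N' ->
  psi y = psi y' -> y = y'.
Proof.
move=> NS N'S yN y'N' psi_eq.
have := iter_merge step_off_inner step_inj (top_off_inner NS yN) (top_off_inner N'S y'N') psi_eq.
case=> [//|[i [z_y z_step]]|[i [z_y' z_step]]]; exfalso.
  exact: orbit_not_into_top NS N'S yN y'N' z_y z_step.
exact: orbit_not_into_top N'S NS y'N' yN z_y' z_step.
Qed.

Lemma S_card_mul_le : #|S| * ceil_sqrt (width le) <= width le.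
Proof.
rewrite -{2}(card_level idx2); apply: (disjoint_family_card (F := fun N => psi @: top N)).
  move=> N NS; split; first by apply/subsetP => _ /imsetP [y _ ->]; apply: psi_top.
  have [_ <- _] := clique_split NS; apply: card_in_imset => y y' yN y'N.
  exact: (psi_inj NS NS yN y'N).
move=> N N' NS N'S NN'; rewrite -setI_eq0; apply/eqP/setP => v; rewrite !inE.
apply/negbTE/negP => /andP [/imsetP [y yN ->] /imsetP [y' y'N' psi_eq]].
have yy' := psi_inj NS N'S yN y'N' psi_eq; subst y'.
by case/eqP: NN'; apply: S_tops_disjoint NS N'S (setIP yN).2 (setIP y'N').2.
Qed.

End Climbing.

Lemma active_family_card : #|S| * ceil_sqrt (width le) <= width le.
Proof.
have [g g_climbing] := climbing_exists; have [fN fN_match] := clique_matchings_exist.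
exact: S_card_mul_le g_climbing fN_match.
Qed.

End ActiveFamily.

End RegularPoset.

Theorem lemma13 (T : finType) (le : rel T) (k : nat) (A : nat -> {set T})
    (R : {set T} * {set T} -> {set T}) (u : nat) (s : option nat) :
  is_poset le ->
  regular_poset le k A ->
  (forall N, active le k A N -> dclique le N.1 N.2 (ceil_sqrt (width le)) (R N)) ->
  forall S : {set {set T} * {set T}},
    (forall N, N \in S -> active le k A N /\ has_char le N (u, s)) ->
    (forall N K, N \in S -> K \in S -> N <> K -> ~ lt_us le R N K) ->
    #|S| <= floor_sqrt (width le).
Proof.
move=> le_po A_reg R_clique S S_active S_antichain.
have [->|/set0Pn [N NS]] := eqVneq S set0; first by rewrite cards0.
have [[[t [p [q [_ _ [x _ _]]]]] _ _] _] := S_active N NS.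
have w_gt0 := width_gt0 le x.
apply: (leq_floor_sqrt w_gt0).
exact: (active_family_card le_po A_reg w_gt0 R_clique S_active S_antichain).
Qed.
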